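(* Let $G$ be a locally compact, Hausdorff, étale groupoid and $\alpha$ an automorphism of $G$. The following are equivalent: (1) $G^\infty_\alpha$ is principal; (2) $G$ is principal and, whenever $x \in G^{(0)}$ and $l\in\mathbb{Z}$ satisfy $[x] = [\alpha^l(x)]$, we have $l = 0$.
   Context: Let $E$ be the directed graph with one vertex $v$ and countably infinitely many edges $e_1,e_2,\dots$. Let $E^*$ be its finite paths (including $v$), $E^\infty$ its infinite paths, $P = E^*\sqcup E^\infty$, $|\mu|$ the length. $H_\infty$ is the groupoid $\{(\alpha x, |\alpha|-|\beta|, \beta x) : x\in P, \alpha,\beta\in E^*\}\subseteq P\times\mathbb{Z}\times P$ with $(x,m,y)(y,n,z)=(x,m+n,z)$, $(x,m,y)^{-1}=(y,-m,x)$, unit space identified with $P$, topology generated by the sets $Z((\alpha,\beta)\setminus F)=\{(\alpha x,|\alpha|-|\beta|,\beta x): x\in P, x\text{ does not begin with an edge in }F\}$ ($F$ finite); $c(x,m,y)=m$. An automorphism is a structure-preserving homeomorphism. $G^\infty_\alpha$ is $H_\infty\times G$ with product topology, unit space $H_\infty^{(0)}\times G^{(0)}$, $r(h,g)=(r(h),r(g))$, $s(h,g)=(s(h),\alpha^{c(h)}(s(g)))$, product $(h_1,g_1)(h_2,g_2)=(h_1h_2,g_1\alpha^{-c(h_1)}(g_2))$, inverse $(h,g)^{-1}=(h^{-1},\alpha^{c(h)}(g^{-1}))$. A groupoid is principal if $g\mapsto(r(g),s(g))$ is injective. For $u\in G^{(0)}$, $[u] = \{r(g) : s(g) = u\}$.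 *)

From mathcomp Require Import all_boot all_order all_algebra.
From mathcomp Require Import all_classical all_reals all_analysis.
Set Implicit Arguments. Unset Strict Implicit. Unset Printing Implicit Defensive.
Import Order.TTheory GRing.Theory Num.Theory.
Local Open Scope classical_set_scope.
Local Open Scope ring_scope.

(* ---------- groupoids (unit space = subset of the arrows) ---------- *)
Record groupoid (T : Type) := Groupoid {
  rg : T -> T;  sg : T -> T;
  mulg : T -> T -> T;  (* meaningful only on composable pairs sg g = rg h *)
  invg : T -> T;
  rg_unit : forall g, rg (rg g) = rg g /\ sg (rg g) = rg g;
  sg_unit : forall g, rg (sg g) = sg g /\ sg (sg g) = sg g;
  rg_mul : forall g h, sg g = rg h -> rg (mulg g h) = rg g;
  sg_mul : forall g h, sg g = rg h -> sg (mulg g h) = sg h;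
  mulA : forall g h k, sg g = rg h -> sg h = rg k ->
           mulg (mulg g h) k = mulg g (mulg h k);
  mul_rg : forall g, mulg (rg g) g = g;
  mul_sg : forall g, mulg g (sg g) = g;
  rg_inv : forall g, rg (invg g) = sg g;
  sg_inv : forall g, sg (invg g) = rg g;
  mulV : forall g, mulg g (invg g) = rg g;
  mulVg : forall g, mulg (invg g) g = sg g
}.

Definition unit_space (T : Type) (G : groupoid T) : set T :=
  [set u | rg G u = u].

Definition principal (X Y : Type) (r s : X -> Y) : Prop :=
  forall g h, (r g, s g) = (r h, s h) -> g = h.

Definition gorbit (T : Type) (G : groupoid T) (u : T) : set T :=
  [set rg G g | g in [set g | sg G g = u]].

Definition mul_continuous (T : topologicalType) (G : groupoid T) : Prop :=
  forall g h, sg G g = rg G h ->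
  forall W, nbhs (mulg G g h) W ->
  exists2 U, nbhs g U & exists2 V, nbhs h V &
    forall g' h', U g' -> V h' -> sg G g' = rg G h' -> W (mulg G g' h').

Definition topological_groupoid (T : topologicalType) (G : groupoid T) : Prop :=
  continuous (rg G) /\ continuous (sg G) /\ continuous (invg G) /\
  mul_continuous G.

Definition local_homeomorphism (T : topologicalType) (f : T -> T) : Prop :=
  continuous f /\
  forall g, exists U : set T, [/\ open U, U g,
    {in U &, injective f} &
    forall V, open V -> V `<=` U -> open (f @` V)].

Definition etale (T : topologicalType) (G : groupoid T) : Prop :=
  topological_groupoid G /\ local_homeomorphism (rg G).

Definition automorphism (T : topologicalType) (G : groupoid T)
    (a b : T -> T) : Prop :=
  [/\ cancel a b, cancel b a, continuous a, continuous b &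
    [/\ forall g, a (rg G g) = rg G (a g),
        forall g, a (sg G g) = sg G (a g),
        forall g, a (invg G g) = invg G (a g) &
        forall g h, sg G g = rg G h -> a (mulg G g h) = mulg G (a g) (a h)]].

Definition apow (T : Type) (a b : T -> T) (l : int) : T -> T :=
  match l with
  | Posz n => iter n a
  | Negz n => iter n.+1 b
  end.

(* ---------- the graph E (one vertex, edges e_0, e_1, ...) and H_infty ---------- *)
(* finite paths = seq nat (the vertex v is [::]); infinite paths = nat -> nat *)
Inductive epath : Type :=
| FinP of seq nat
| InfP of (nat -> nat).

Definition catp (al : seq nat) (x : epath) : epath :=
  match x with
  | FinP s => FinP (al ++ s)
  | InfP f => InfP (fun n => if (n < size al)%N then nth 0%N al n else f (n - size al)%N)
  end.

Definition Hinf_mem (h : epath * int * epath) : Prop :=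
  exists (z : epath) (al be : seq nat),
    [/\ h.1.1 = catp al z, h.2 = catp be z &
        h.1.2 = (size al)%:Z - (size be)%:Z].

Definition Hinf : Type := {h : epath * int * epath | Hinf_mem h}.

(* unit space of H_infty identified with P = epath *)
Definition Hr (h : Hinf) : epath := (proj1_sig h).1.1.
Definition Hs (h : Hinf) : epath := (proj1_sig h).2.
Definition Hc (h : Hinf) : int := (proj1_sig h).1.2.

(* G^infty_alpha = H_infty x G, with r and s as in the paper *)
Definition Ginf_r (T : Type) (G : groupoid T) (p : Hinf * T) : epath * T :=
  (Hr p.1, rg G p.2).
Definition Ginf_s (T : Type) (G : groupoid T) (a b : T -> T) (p : Hinf * T)
  : epath * T :=
  (Hs p.1, apow a b (Hc p.1) (sg G p.2)).

(** Let z be the constant infinite path and h_l = (z, l, z), an arrow of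
    H_infty for every l.  The pairs (h_0, g) embed G into G^infty_alpha
    compatibly with range and source, so principality passes down to G; and
    an arrow g from a^l(x) to x yields the arrows (h_l, g^-1) and (h_0, s g)
    with the same range and source, forcing l = 0.  Conversely, if (h, g) and
    (h', g') have the same range and source, then s g' = a^(c h - c h') (s g)
    while s g and s g' lie in the same orbit, so c h = c h'; hence s g = s g',
    g = g' by principality of G, and h = h' since an arrow of H_infty is
    determined by its range, source and degree. *)
From mathcomp Require Import all_boot all_order all_algebra.
From mathcomp Require Import all_classical all_reals all_analysis.
From mathcomp Require Import zify.
Set Implicit Arguments. Unset Strict Implicit. Unset Printing Implicit Defensive.
Import Order.TTheory GRing.Theory Num.Theory.
Local Open Scope classical_set_scope.
Local Open Scope ring_scope.

Section IntegerPowers.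
Variables (T : Type) (a b : T -> T).
Hypotheses (ab : cancel a b) (ba : cancel b a).

Lemma apowS l x : apow a b (l + 1) x = a (apow a b l x).
Proof.
case: l => [n|[|n]]; first by rewrite (_ : Posz n + 1 = Posz n.+1) /= ?iterS //; lia.
  by rewrite /= ba.
by rewrite (_ : Negz n.+1 + 1 = Negz n) /= ?ba // !NegzE; lia.
Qed.

Lemma apowP l x : apow a b (l - 1) x = b (apow a b l x).
Proof. by rewrite -{2}(subrK 1 l) apowS ab. Qed.

Lemma apowD n m x : apow a b (n + m) x = apow a b m (apow a b n x).
Proof.
case: m => [k|k]; elim: k => [|k IH].
- by rewrite addr0.
- by rewrite (_ : n + Posz k.+1 = (n + Posz k) + 1) ?apowS ?IH //; lia.
- by rewrite (_ : Negz 0 = - 1) ?apowP.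
- by rewrite (_ : n + Negz k.+1 = (n + Negz k) - 1) ?apowP ?IH // !NegzE; lia.
Qed.

Lemma apowNK n x : apow a b (- n) (apow a b n x) = x.
Proof. by rewrite -apowD subrr. Qed.

End IntegerPowers.

Section GroupoidOrbits.
Variables (T : Type) (G : groupoid T).

Lemma unit_space_sg x : unit_space G x -> sg G x = x.
Proof. by move=> ux; rewrite -{1}ux (proj2 (rg_unit G x)). Qed.

Lemma sg_in_unit_space g : unit_space G (sg G g).
Proof. exact: (proj1 (sg_unit G g)). Qed.

Lemma gorbit_sg g : gorbit G (sg G g) = gorbit G (rg G g).
Proof.
apply/seteqP; split => _ [k /= Hk <-].
  exists (mulg G k (invg G g)); last by rewrite rg_mul // rg_inv.
  by rewrite /= sg_mul ?sg_inv // rg_inv.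
by exists (mulg G k g); rewrite /= ?sg_mul ?rg_mul.
Qed.

End GroupoidOrbits.

Definition aperiodic_orbits (T : Type) (G : groupoid T) (a b : T -> T) : Prop :=
  forall (x : T) (l : int), unit_space G x ->
    gorbit G x = gorbit G (apow a b l x) -> l = 0.

Definition zero_path : epath := InfP (fun _ => 0%N).

Lemma catp_nseq0 k : catp (nseq k 0%N) zero_path = zero_path.
Proof.
congr InfP; apply: funext => n.
by case: ifP => // _; rewrite nth_nseq; case: ifP.
Qed.

(* z = 0^k z for every k, so (z, l, z) is of the form (al z, |al| - |be|, be z). *)
Lemma Hinf_mem_zero_path l : Hinf_mem ((zero_path, l), zero_path).
Proof.
have z0 : catp [::] zero_path = zero_path by exact: (catp_nseq0 0).
case: l => [k|k].
  exists zero_path, (nseq k 0%N), [::].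
  by rewrite catp_nseq0 z0 /= size_nseq subr0.
exists zero_path, [::], (nseq k.+1 0%N).
by rewrite catp_nseq0 z0 /= size_nseq NegzE sub0r.
Qed.

Definition Hinf_loop (l : int) : Hinf := exist _ _ (Hinf_mem_zero_path l).

Lemma Hinf_inj (h h' : Hinf) :
  Hr h = Hr h' -> Hc h = Hc h' -> Hs h = Hs h' -> h = h'.
Proof.
case: h h' => [[[x m] y] p] [[[x' m'] y'] p']; rewrite /Hr /Hc /Hs /= => Ex Em Ey.
by subst; rewrite (Prop_irrelevance p p').
Qed.

Section SkewProduct.
Variables (T : Type) (G : groupoid T) (a b : T -> T).

Lemma Ginf_principal_principal :
  principal (Ginf_r G) (Ginf_s G a b) -> principal (rg G) (sg G).
Proof.
move=> P g h [Erg Esg].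
have := P (Hinf_loop 0, g) (Hinf_loop 0, h).
by rewrite /Ginf_r /Ginf_s /= Erg Esg => /(_ erefl) [].
Qed.

Lemma Ginf_principal_aperiodic :
  principal (Ginf_r G) (Ginf_s G a b) -> aperiodic_orbits G a b.
Proof.
move=> P x l ux Eorb.
have : gorbit G x x by exists x; rewrite //= unit_space_sg.
rewrite Eorb => -[g /= sg_g rg_g].
have := P (Hinf_loop l, invg G g) (Hinf_loop 0, sg G g).
rewrite /Ginf_r /Ginf_s /Hr /Hs /= rg_inv sg_inv rg_g.
rewrite (proj1 (sg_unit G g)) (proj2 (sg_unit G g)) sg_g.
by move=> /(_ erefl) /(congr1 (fun p => Hc p.1)).
Qed.

Hypotheses (ab : cancel a b) (ba : cancel b a).

Lemma principal_Ginf :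
  principal (rg G) (sg G) -> aperiodic_orbits G a b ->
  principal (Ginf_r G) (Ginf_s G a b).
Proof.
move=> PG Po [h g] [h' g']; rewrite /Ginf_r /Ginf_s /= => -[Er Erg Es Esg].
have shift : apow a b (Hc h - Hc h') (sg G g) = sg G g'.
  by rewrite apowD // Esg apowNK.
have Ec : Hc h = Hc h'.
  apply/eqP; rewrite -subr_eq0; apply/eqP.
  apply: (Po (sg G g)); first exact: sg_in_unit_space.
  by rewrite shift !gorbit_sg Erg.
have Esg' : sg G g = sg G g'.
  by rewrite -(apowNK ab ba (Hc h) (sg G g)) Esg -Ec apowNK.
by rewrite (Hinf_inj Er Ec Es) (PG g g') // Erg Esg'.
Qed.

End SkewProduct.

Theorem proposition5p1 (T : topologicalType) (G : groupoid T) (a b : T -> T) :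
  locally_compact [set: T] -> hausdorff_space T -> etale G ->
  automorphism G a b ->
  (principal (Ginf_r G) (Ginf_s G a b) <->
   principal (rg G) (sg G) /\
   (forall (x : T) (l : int), unit_space G x ->
      gorbit G x = gorbit G (apow a b l x) -> l = 0)).
Proof.
move=> _ _ _ [ab ba _ _ _]; split.
  by move=> P; split; [exact: Ginf_principal_principal P
                      | exact: Ginf_principal_aperiodic P].
by case; exact: principal_Ginf.
Qed.
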